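(* Let $s > \frac12$, $T>0$, and let $v \in C([0,T];H^s(\mathbb T))$ be a solution of \[\partial_t \hat{v}(n) - ip(n) \hat{v}(n) = -\frac{\mu i}{(2\pi)^2} n\big(|\hat{v}(n)|^2 - |\hat{v}_0(n)|^2\big) \hat{v}(n) + \frac{\mu i}{3(2\pi)^2}n \sum_{\mathcal N_n} \hat{v}(n_1)\hat{v}(n_2)\hat{v}(n_3),\qquad n\in\mathbb Z,\] with $v(0)=v_0$. Then \[\Big\|\mathcal F_x^{-1}\big(n(|\hat{v}(n)|^2 - |\hat{v}_0(n)|^2) \hat{v}(n)\big)\Big\|_{L_T^{\infty}H^{-s}} \lesssim \|v\|_{L_T^{\infty}H^s}^3\] and \[\Big\|\mathcal F_x^{-1}\Big(n \sum_{\mathcal N_n} \hat{v}(n_1)\hat{v}(n_2)\hat{v}(n_3)\Big)\Big\|_{L_T^{\infty}H^{-s}} \lesssim \|v\|_{L_T^{\infty}H^s}^3.\]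
   Context: $\mathbb T=\mathbb R/2\pi\mathbb Z$; $\beta\ge0$, $\gamma\in\mathbb R$, $\mu=\pm1$; $v$ is real-valued and $\hat v(n)$ denotes its spatial Fourier coefficient at $n\in\mathbb Z$. $p(n)=n^5+\beta n^3-(\gamma+\frac{\mu}{2\pi}\|v_0\|_{L^2}^2)n-\frac{\mu n}{(2\pi)^2}|\hat v_0(n)|^2$, and $\mathcal N_n=\{(n_1,n_2,n_3)\in\mathbb Z^3: n_1+n_2+n_3=n,\ (n_1+n_2)(n_2+n_3)(n_3+n_1)\ne0\}$. $L^\infty_TH^{\sigma}$ denotes $L^\infty([0,T];H^\sigma(\mathbb T))$. $A\lesssim B$ means $A\le CB$ for a constant $C>0$. *)

From Stdlib Require Import Reals ZArith.
From Coquelicot Require Import Coquelicot.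
Open Scope R_scope.

(* A (generalized) function on the torus T = R/2piZ is represented by its
   sequence of Fourier coefficients  a : Z -> C, with the convention
   a n = \int_0^{2pi} f(x) e^{-inx} dx  (so f = (1/2pi) sum_n a n e^{inx}). *)

Definition zsumR (f : Z -> R) : R :=
  Series (fun k => f (Z.of_nat k)) + Series (fun k => f (- Z.of_nat (S k))%Z).

Definition zsumR_ex (f : Z -> R) : Prop :=
  ex_series (fun k => f (Z.of_nat k)) /\ ex_series (fun k => f (- Z.of_nat (S k))%Z).

Definition zsumC (f : Z -> C) : C :=
  (zsumR (fun n => Re (f n)), zsumR (fun n => Im (f n))).

(* Japanese bracket weight <n>^{2s} = (1+n^2)^s. *)
Definition jbr2 (s : R) (n : Z) : R := Rpower (1 + (IZR n) ^ 2) s.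

(* Squared H^s norm (up to the harmless constant 1/(2pi) of Parseval). *)
Definition Hs_sq (s : R) (a : Z -> C) : R :=
  zsumR (fun n => jbr2 s n * (Cmod (a n)) ^ 2).

Definition in_Hs (s : R) (a : Z -> C) : Prop :=
  zsumR_ex (fun n => jbr2 s n * (Cmod (a n)) ^ 2).

Definition Hs_norm (s : R) (a : Z -> C) : R := sqrt (Hs_sq s a).

(* Real-valuedness of the function: conjugate symmetry of the coefficients. *)
Definition real_valued (a : Z -> C) : Prop :=
  forall n : Z, a (- n)%Z = Cconj (a n).

(* Squared L^2 norm via Parseval, with the above Fourier convention. *)
Definition L2_sq (a : Z -> C) : R :=
  / (2 * PI) * zsumR (fun n => (Cmod (a n)) ^ 2).

Definition psym (beta gamma mu : R) (v0 : Z -> C) (n : Z) : R :=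
  (IZR n) ^ 5 + beta * (IZR n) ^ 3
  - (gamma + mu / (2 * PI) * L2_sq v0) * IZR n
  - mu * IZR n / (2 * PI) ^ 2 * (Cmod (v0 n)) ^ 2.

(* Nonresonant set N_n: n1+n2+n3 = n with (n1+n2)(n2+n3)(n3+n1) <> 0,
   parametrised by (n1, n2), n3 = n - n1 - n2. *)
(* sum_{N_n} a(n1) a(n2) a(n3)  (absolutely convergent for a in H^s, s > 1/2). *)
Definition nonres_sum (a : Z -> C) (n : Z) : C :=
  zsumC (fun n1 => zsumC (fun n2 =>
    if Z.eq_dec ((n1 + n2) * (n2 + (n - n1 - n2)) * ((n - n1 - n2) + n1)) 0
    then RtoC 0
    else (a n1 * a n2 * a (n - n1 - n2)%Z)%C)).

Definition res_term (a a0 : Z -> C) (n : Z) : C :=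
  (RtoC (IZR n * ((Cmod (a n)) ^ 2 - (Cmod (a0 n)) ^ 2)) * a n)%C.

Definition nonres_term (a : Z -> C) (n : Z) : C :=
  (RtoC (IZR n) * nonres_sum a n)%C.

Definition cont_Hs (s T : R) (v : R -> Z -> C) : Prop :=
  (forall t, 0 <= t <= T -> in_Hs s (v t) /\ real_valued (v t)) /\
  forall t0, 0 <= t0 <= T -> forall eps, 0 < eps -> exists delta, 0 < delta /\
    forall t, 0 <= t <= T -> Rabs (t - t0) < delta ->
      Hs_norm s (fun n => (v t n - v t0 n)%C) < eps.

(* v solves the Fourier-side equation on (0,T) (coefficientwise derivative),
   with datum v0 = v(0). *)
Definition solves (beta gamma mu T : R) (v : R -> Z -> C) : Prop :=
  forall n : Z, forall t, 0 < t < T ->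
    is_derive (fun tau => v tau n) t
      (Ci * RtoC (psym beta gamma mu (v 0) n) * v t n
       - RtoC (mu / (2 * PI) ^ 2) * Ci * res_term (v t) (v 0) n
       + RtoC (mu / (3 * (2 * PI) ^ 2)) * Ci * nonres_term (v t) n)%C.

From Stdlib Require Import Reals ZArith Lra Lia.
From Coquelicot Require Import Coquelicot.
Open Scope R_scope.

(** The estimates hold at each fixed time and use only the bound
    [|v(t)|_{H^s} <= M]. Write [al = |v^(t)|] and [A = <n>^s al], so that
    [|A|_{l^2} = |v(t)|_{H^s}]; since [s > 1/2] the weight [<n>^{-s}] is square
    summable and Cauchy-Schwarz gives [|al|_{l^1} <~ |v(t)|_{H^s}].
    Resonant term: [<n>^{2s} |v^(n)|^2 <= M^2] pointwise, and [|n| <= <n>^{2s}],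
    so [|n| (|v^(n)|^2 - |v0^(n)|^2)] is bounded by [M^2] and the term by
    [M^2 |v(t)|_{H^s}] in [H^{-s}].
    Nonresonant term: the sum over [N_n] is dominated by the triple convolution
    [al * al * al]; Peetre's inequality [<n>^s <= 2^s (<k>^s + <n-k>^s)] moves the
    weight onto a single factor, [<n>^{-s} |n| <= <n>^s], and Young's inequality
    [l^1 * l^2 -> l^2] closes the estimate with [|al|_{l^1}^2 |A|_{l^2}]. *)

Lemma Un_cv_le_const (u : nat -> R) (l B : R) :
  Un_cv u l -> (forall n, u n <= B) -> l <= B.
Proof.
  intros Hu HB. apply (Rle_cv_lim HB Hu).
  intros e He. exists 0%nat. intros n _. unfold Rdist. rewrite Rminus_eq_0, Rabs_R0. exact He.
Qed.

Lemma Un_cv_Series (a : nat -> R) : ex_series a -> Un_cv (sum_f_R0 a) (Series a).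
Proof. intro Ha. apply is_series_Reals, Series_correct, Ha. Qed.

Lemma ex_series_nonneg_bounded (a : nat -> R) (B : R) :
  (forall n, 0 <= a n) -> (forall N, sum_f_R0 a N <= B) -> ex_series a.
Proof.
  intros Ha HB.
  destruct (growing_cv (sum_f_R0 a)) as [l Hl].
  - intro n. simpl. specialize (Ha (S n)). lra.
  - exists B. intros x [n ->]. apply HB.
  - exists l. apply is_series_Reals. exact Hl.
Qed.

Lemma term_le_sum_f_R0 (a : nat -> R) (j N : nat) :
  (forall n, 0 <= a n) -> (j <= N)%nat -> a j <= sum_f_R0 a N.
Proof.
  intros Ha HjN. induction HjN as [|N HjN IH].
  - destruct j as [|j]; simpl; [lra|].
    pose proof (cond_pos_sum a j Ha). lra.
  - simpl. specialize (Ha (S N)). lra.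
Qed.

(** * Sums over Z *)

Definition zpartial (f : Z -> R) (N : nat) : R :=
  sum_f_R0 (fun k => f (Z.of_nat k)) N + sum_f_R0 (fun k => f (- Z.of_nat (S k))%Z) N.

Lemma Un_cv_zpartial (f : Z -> R) : zsumR_ex f -> Un_cv (zpartial f) (zsumR f).
Proof. intros [E1 E2]. apply CV_plus; apply Un_cv_Series; assumption. Qed.

Lemma zpartial_nonneg (f : Z -> R) (N : nat) : (forall n, 0 <= f n) -> 0 <= zpartial f N.
Proof.
  intro Hf. unfold zpartial.
  pose proof (cond_pos_sum (fun k => f (Z.of_nat k)) N (fun k => Hf _)).
  pose proof (cond_pos_sum (fun k => f (- Z.of_nat (S k))%Z) N (fun k => Hf _)). lra.
Qed.

Lemma zpartial_le (f g : Z -> R) (N : nat) : (forall n, f n <= g n) -> zpartial f N <= zpartial g N.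
Proof.
  intro Hfg. unfold zpartial.
  pose proof (sum_growing (fun k => f (Z.of_nat k)) (fun k => g (Z.of_nat k)) N (fun k => Hfg _)).
  pose proof (sum_growing (fun k => f (- Z.of_nat (S k))%Z) (fun k => g (- Z.of_nat (S k))%Z) N
    (fun k => Hfg _)).
  lra.
Qed.

Lemma zpartial_le_zsumR (f : Z -> R) (N : nat) :
  (forall n, 0 <= f n) -> zsumR_ex f -> zpartial f N <= zsumR f.
Proof.
  intros Hf Ef. apply growing_ineq; [|exact (Un_cv_zpartial f Ef)].
  intro M. unfold zpartial. rewrite !tech5.
  pose proof (Hf (Z.of_nat (S M))). pose proof (Hf (- Z.of_nat (S (S M)))%Z). lra.
Qed.

Lemma zsumR_bounded (f : Z -> R) (B : R) :
  (forall n, 0 <= f n) -> (forall N, zpartial f N <= B) -> zsumR_ex f /\ zsumR f <= B.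
Proof.
  intros Hf HB. unfold zpartial in HB.
  assert (P1 : forall N, 0 <= sum_f_R0 (fun k => f (Z.of_nat k)) N)
    by (intro; apply cond_pos_sum; auto).
  assert (P2 : forall N, 0 <= sum_f_R0 (fun k => f (- Z.of_nat (S k))%Z) N)
    by (intro; apply cond_pos_sum; auto).
  assert (Ef : zsumR_ex f).
  { split; apply (ex_series_nonneg_bounded _ B); auto;
      intro N; specialize (HB N); [specialize (P2 N)|specialize (P1 N)]; lra. }
  split; [exact Ef|]. exact (Un_cv_le_const _ _ _ (Un_cv_zpartial f Ef) HB).
Qed.

Lemma zsumR_ex_ext (f g : Z -> R) : (forall n, f n = g n) -> zsumR_ex f -> zsumR_ex g.
Proof.
  intros Hfg [E1 E2].
  split; [eapply ex_series_ext with (2 := E1)|eapply ex_series_ext with (2 := E2)];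
    intro; apply Hfg.
Qed.

Lemma zsumR_ext (f g : Z -> R) : (forall n, f n = g n) -> zsumR f = zsumR g.
Proof. intro Hfg. unfold zsumR. f_equal; apply Series_ext; intro; apply Hfg. Qed.

Lemma zsumR_ex_dominated (f g : Z -> R) : (forall n, Rabs (f n) <= g n) -> zsumR_ex g -> zsumR_ex f.
Proof.
  intros Hfg [E1 E2].
  split; [apply (@ex_series_le R_AbsRing R_CompleteNormedModule) with (2 := E1)
        |apply (@ex_series_le R_AbsRing R_CompleteNormedModule) with (2 := E2)];
    intro; apply Hfg.
Qed.

Lemma zsumR_le (f g : Z -> R) :
  (forall n, 0 <= f n <= g n) -> zsumR_ex g -> zsumR_ex f /\ zsumR f <= zsumR g.
Proof.
  intros Hfg Eg.
  assert (Ef : zsumR_ex f).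
  { apply (zsumR_ex_dominated f g); auto. intro n. specialize (Hfg n).
    rewrite Rabs_pos_eq; lra. }
  split; [exact Ef|]. destruct Ef as [E1 E2], Eg as [F1 F2]. unfold zsumR.
  pose proof (Series_le (fun k => f (Z.of_nat k)) _ (fun k => Hfg _) F1).
  pose proof (Series_le (fun k => f (- Z.of_nat (S k))%Z) _ (fun k => Hfg _) F2). lra.
Qed.

Lemma zsumR_nonneg (f : Z -> R) : (forall n, 0 <= f n) -> zsumR_ex f -> 0 <= zsumR f.
Proof.
  intros Hf Ef. pose proof (zpartial_nonneg f 0 Hf). pose proof (zpartial_le_zsumR f 0 Hf Ef). lra.
Qed.

Lemma zsumR_plus (f g : Z -> R) : zsumR_ex f -> zsumR_ex g ->
  zsumR_ex (fun n => f n + g n) /\ zsumR (fun n => f n + g n) = zsumR f + zsumR g.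
Proof.
  intros [E1 E2] [F1 F2]. split.
  - split; [apply (ex_series_plus _ _ E1 F1)|apply (ex_series_plus _ _ E2 F2)].
  - unfold zsumR. rewrite (Series_plus _ _ E1 F1), (Series_plus _ _ E2 F2). ring.
Qed.

Lemma zsumR_scal (c : R) (f : Z -> R) : zsumR_ex f ->
  zsumR_ex (fun n => c * f n) /\ zsumR (fun n => c * f n) = c * zsumR f.
Proof.
  intros [E1 E2]. split.
  - split; [apply (ex_series_scal_l c _ E1)|apply (ex_series_scal_l c _ E2)].
  - unfold zsumR. rewrite !Series_scal_l. ring.
Qed.

Lemma zsumR_term_le (f : Z -> R) (k : Z) : (forall n, 0 <= f n) -> zsumR_ex f -> f k <= zsumR f.
Proof.
  intros Hf Ef. set (N := Z.to_nat (Z.abs k)).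
  apply Rle_trans with (zpartial f N); [|apply zpartial_le_zsumR; auto].
  unfold zpartial.
  pose proof (cond_pos_sum (fun j => f (Z.of_nat j)) N (fun j => Hf _)).
  pose proof (cond_pos_sum (fun j => f (- Z.of_nat (S j))%Z) N (fun j => Hf _)).
  destruct (Z_le_gt_dec 0 k).
  - pose proof (term_le_sum_f_R0 (fun j => f (Z.of_nat j)) (Z.to_nat k) N (fun j => Hf _)
      ltac:(unfold N; lia)) as Hk.
    cbv beta in Hk. rewrite Z2Nat.id in Hk by lia. lra.
  - pose proof (term_le_sum_f_R0 (fun j => f (- Z.of_nat (S j))%Z) (Z.to_nat (- k - 1)) N
      (fun j => Hf _) ltac:(unfold N; lia)) as Hk.
    cbv beta in Hk. replace (- Z.of_nat (S (Z.to_nat (- k - 1))))%Z with k in Hk by lia. lra.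
Qed.

Lemma zsumR_opp_index (f : Z -> R) :
  zsumR_ex f -> zsumR_ex (fun n => f (- n)%Z) /\ zsumR (fun n => f (- n)%Z) = zsumR f.
Proof.
  intros [E1 E2].
  assert (A1 : ex_series (fun k => f (- Z.of_nat k)%Z)).
  { apply ex_series_incr_1, E2. }
  assert (A2 : ex_series (fun k => f (- - Z.of_nat (S k))%Z)).
  { apply ex_series_incr_1 in E1. exact E1. }
  split; [split; assumption|]. unfold zsumR.
  rewrite (Series_incr_1 _ A1), (Series_incr_1 _ E1).
  rewrite (Series_ext (fun k => f (- - Z.of_nat (S k))%Z) (fun k => f (Z.of_nat (S k))))
    by (intro; cbv beta; f_equal; lia).
  simpl. ring.
Qed.

Lemma zsumR_shift1 (f : Z -> R) :
  zsumR_ex f -> zsumR_ex (fun n => f (n + 1)%Z) /\ zsumR (fun n => f (n + 1)%Z) = zsumR f.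
Proof.
  intros [E1 E2].
  assert (A1 : ex_series (fun k => f (Z.of_nat k + 1)%Z)).
  { apply ex_series_incr_1 in E1. eapply ex_series_ext with (2 := E1).
    intro. cbv beta. f_equal. lia. }
  assert (A2 : ex_series (fun k => f (- Z.of_nat (S k) + 1)%Z)).
  { apply ex_series_incr_1. eapply ex_series_ext with (2 := E2).
    intro. cbv beta. f_equal. lia. }
  split; [split; assumption|]. unfold zsumR.
  rewrite (Series_incr_1 _ E1), (Series_incr_1 _ A2).
  rewrite (Series_ext (fun k => f (Z.of_nat k + 1)%Z) (fun k => f (Z.of_nat (S k))))
    by (intro; cbv beta; f_equal; lia).
  rewrite (Series_ext (fun k => f (- Z.of_nat (S (S k)) + 1)%Z) (fun k => f (- Z.of_nat (S k))%Z))
    by (intro; cbv beta; f_equal; lia).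
  simpl. ring.
Qed.

Lemma zsumR_shift (f : Z -> R) (m : Z) :
  zsumR_ex f -> zsumR_ex (fun n => f (n + m)%Z) /\ zsumR (fun n => f (n + m)%Z) = zsumR f.
Proof.
  assert (Hnat : forall (g : Z -> R) (j : nat), zsumR_ex g ->
    zsumR_ex (fun n => g (n + Z.of_nat j)%Z) /\ zsumR (fun n => g (n + Z.of_nat j)%Z) = zsumR g).
  { intros g j Eg. induction j as [|j [IHe IHv]].
    - split; [apply (zsumR_ex_ext g)|apply zsumR_ext]; auto; intro; f_equal; lia.
    - destruct (zsumR_shift1 _ IHe) as [E V].
      assert (Hj : forall n, g (n + 1 + Z.of_nat j)%Z = g (n + Z.of_nat (S j))%Z)
        by (intro; f_equal; lia).
      split; [apply (zsumR_ex_ext _ _ Hj E)|]. rewrite <- (zsumR_ext _ _ Hj), V. exact IHv. }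
  intro Ef. destruct (Z_le_gt_dec 0 m) as [Hm|Hm].
  - replace m with (Z.of_nat (Z.to_nat m)) by lia. apply Hnat, Ef.
  - destruct (zsumR_opp_index f Ef) as [E1 V1].
    destruct (Hnat _ (Z.to_nat (- m)) E1) as [E2 V2].
    destruct (zsumR_opp_index _ E2) as [E3 V3].
    assert (Hm' : forall n, f (- (- n + Z.of_nat (Z.to_nat (- m))))%Z = f (n + m)%Z)
      by (intro; f_equal; lia).
    split; [apply (zsumR_ex_ext _ _ Hm' E3)|].
    rewrite <- (zsumR_ext _ _ Hm'), V3, V2, V1. reflexivity.
Qed.

Lemma zsumR_sub_index (f : Z -> R) (m : Z) :
  zsumR_ex f -> zsumR_ex (fun k => f (m - k)%Z) /\ zsumR (fun k => f (m - k)%Z) = zsumR f.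
Proof.
  intro Ef. destruct (zsumR_shift f m Ef) as [E1 V1].
  destruct (zsumR_opp_index _ E1) as [E2 V2].
  assert (Hm : forall k, f (- k + m)%Z = f (m - k)%Z) by (intro; f_equal; lia).
  split; [apply (zsumR_ex_ext _ _ Hm E2)|]. rewrite <- (zsumR_ext _ _ Hm), V2, V1. reflexivity.
Qed.

Lemma zsumR_sum_f_R0 (h : nat -> Z -> R) (N : nat) : (forall i, zsumR_ex (h i)) ->
  zsumR_ex (fun k => sum_f_R0 (fun i => h i k) N) /\
  zsumR (fun k => sum_f_R0 (fun i => h i k) N) = sum_f_R0 (fun i => zsumR (h i)) N.
Proof.
  intro Eh. induction N as [|N [IHe IHv]]; [split; [apply Eh|reflexivity]|].
  destruct (zsumR_plus _ _ IHe (Eh (S N))) as [E V].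
  simpl. split; [exact E|]. rewrite V, IHv. reflexivity.
Qed.

Lemma zsumR_zpartial_swap (h : Z -> Z -> R) (N : nat) : (forall n, zsumR_ex (h n)) ->
  zsumR_ex (fun k => zpartial (fun n => h n k) N) /\
  zsumR (fun k => zpartial (fun n => h n k) N) = zpartial (fun n => zsumR (h n)) N.
Proof.
  intro Eh. unfold zpartial.
  destruct (zsumR_sum_f_R0 (fun i => h (Z.of_nat i)) N (fun i => Eh _)) as [E1 V1].
  destruct (zsumR_sum_f_R0 (fun i => h (- Z.of_nat (S i))%Z) N (fun i => Eh _)) as [E2 V2].
  destruct (zsumR_plus _ _ E1 E2) as [E V]. split; [exact E|]. rewrite V, V1, V2. reflexivity.
Qed.

Lemma zsumR_sq_bound (x : Z -> R) (j : Z) :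
  zsumR_ex (fun n => x n ^ 2) -> x j <= (1 + zsumR (fun n => x n ^ 2)) / 2.
Proof.
  intro Ex. pose proof (zsumR_term_le (fun n => x n ^ 2) j (fun n => pow2_ge_0 _) Ex).
  pose proof (pow2_ge_0 (x j - 1)). cbv beta in *. nra.
Qed.

Lemma zsumR_cauchy_schwarz (x y : Z -> R) : (forall n, 0 <= x n) -> (forall n, 0 <= y n) ->
  zsumR_ex (fun n => x n ^ 2) -> zsumR_ex (fun n => y n ^ 2) ->
  zsumR_ex (fun n => x n * y n) /\
  zsumR (fun n => x n * y n) ^ 2 <= zsumR (fun n => x n ^ 2) * zsumR (fun n => y n ^ 2).
Proof.
  intros Hx Hy Ex Ey.
  set (X := zsumR (fun n => x n ^ 2)). set (Y := zsumR (fun n => y n ^ 2)).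
  assert (Exy : zsumR_ex (fun n => x n * y n)).
  { destruct (zsumR_plus _ _ Ex Ey) as [E _].
    destruct (zsumR_scal (/ 2) _ E) as [E' _].
    refine (proj1 (zsumR_le _ _ _ E')). intro n.
    specialize (Hx n). specialize (Hy n). pose proof (pow2_ge_0 (x n - y n)). split; nra. }
  split; [exact Exy|].
  set (P := zsumR (fun n => x n * y n)).
  (* [2 x_k y_k x_n y_n <= x_k^2 y_n^2 + y_k^2 x_n^2], summed over n and then over k *)
  assert (Hk : forall k, x k * y k * P <= Y / 2 * x k ^ 2 + X / 2 * y k ^ 2).
  { intro k. unfold P. rewrite <- (proj2 (zsumR_scal (x k * y k) _ Exy)).
    destruct (zsumR_scal (x k ^ 2 / 2) _ Ey) as [E1 V1].
    destruct (zsumR_scal (y k ^ 2 / 2) _ Ex) as [E2 V2].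
    destruct (zsumR_plus _ _ E1 E2) as [E3 V3].
    apply Rle_trans with (zsumR (fun n => x k ^ 2 / 2 * y n ^ 2 + y k ^ 2 / 2 * x n ^ 2)).
    - refine (proj2 (zsumR_le _ _ _ E3)). intro n.
      pose proof (Hx k). pose proof (Hy k). pose proof (Hx n). pose proof (Hy n).
      pose proof (pow2_ge_0 (x k * y n - x n * y k)).
      split; [apply Rmult_le_pos; apply Rmult_le_pos|nra]; assumption.
    - rewrite V3, V1, V2. unfold X, Y. lra. }
  destruct (zsumR_scal (Y / 2) _ Ex) as [E1 V1].
  destruct (zsumR_scal (X / 2) _ Ey) as [E2 V2].
  destruct (zsumR_plus _ _ E1 E2) as [E3 V3].
  assert (P0 : 0 <= P) by (apply zsumR_nonneg; auto; intro; apply Rmult_le_pos; auto).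
  replace (P ^ 2) with (P * P) by ring. unfold P at 2.
  rewrite <- (proj2 (zsumR_scal P _ Exy)).
  apply Rle_trans with (zsumR (fun n => Y / 2 * x n ^ 2 + X / 2 * y n ^ 2)).
  - refine (proj2 (zsumR_le _ _ _ E3)). intro n.
    split; [repeat apply Rmult_le_pos; auto|rewrite Rmult_comm; apply Hk].
  - rewrite V3, V1, V2. fold X Y. lra.
Qed.

Lemma Cmod_zpartial_le (f : Z -> C) (N : nat) :
  Cmod (zpartial (fun n => Re (f n)) N, zpartial (fun n => Im (f n)) N)
  <= zpartial (fun n => Cmod (f n)) N.
Proof.
  assert (Hsum : forall g : nat -> C,
             Cmod (sum_f_R0 (fun k => Re (g k)) N, sum_f_R0 (fun k => Im (g k)) N)
                                     <= sum_f_R0 (fun k => Cmod (g k)) N).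
  { intro g. induction N as [|N IH]; [simpl; destruct (g 0%nat); apply Rle_refl|].
    rewrite !tech5. set (p := (sum_f_R0 (fun k => Re (g k)) N, sum_f_R0 (fun k => Im (g k)) N)).
    eapply Rle_trans; [exact (Cmod_triangle p (g (S N)))|]. unfold p. lra. }
  unfold zpartial.
  eapply Rle_trans; [|apply Rplus_le_compat; apply Hsum].
  apply (Cmod_triangle (_, _) (_, _)).
Qed.

Lemma Im_le_Cmod (c : C) : Rabs (Im c) <= Cmod c.
Proof.
  rewrite <- (Rabs_pos_eq (Cmod c)) by apply Cmod_ge_0.
  apply Rsqr_le_abs_0. unfold Rsqr. pose proof (Cmod2_alt c). pose proof (pow2_ge_0 (Re c)). nra.
Qed.

Lemma Cmod_zsumC_le (f : Z -> C) (g : Z -> R) :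
  (forall n, Cmod (f n) <= g n) -> zsumR_ex g -> Cmod (zsumC f) <= zsumR g.
Proof.
  intros Hfg Eg.
  destruct (zsumR_le (fun n => Cmod (f n)) g) as [E Hle];
    [intro; split; [apply Cmod_ge_0|apply Hfg]|exact Eg|].
  eapply Rle_trans; [|exact Hle].
  set (S := zsumR (fun n => Cmod (f n))).
  assert (S0 : 0 <= S) by (apply zsumR_nonneg; auto; intro; apply Cmod_ge_0).
  set (u := zpartial (fun n => Re (f n))). set (v := zpartial (fun n => Im (f n))).
  assert (Cu : Un_cv u (Re (zsumC f)))
    by exact (Un_cv_zpartial _ (zsumR_ex_dominated _ _ (fun n => re_le_Cmod _) E)).
  assert (Cv : Un_cv v (Im (zsumC f)))
    by exact (Un_cv_zpartial _ (zsumR_ex_dominated _ _ (fun n => Im_le_Cmod _) E)).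
  assert (Hsq : Cmod (zsumC f) ^ 2 <= S ^ 2).
  { rewrite Cmod2_alt. replace (Re (zsumC f) ^ 2 + Im (zsumC f) ^ 2)
      with (Re (zsumC f) * Re (zsumC f) + Im (zsumC f) * Im (zsumC f)) by ring.
    apply (Un_cv_le_const (fun N => u N * u N + v N * v N));
      [apply CV_plus; apply CV_mult; assumption|].
    intro N. pose proof (Cmod_zpartial_le f N) as HN. fold u v in HN.
    pose proof (zpartial_le_zsumR _ N (fun n => Cmod_ge_0 (f n)) E). fold S in H.
    pose proof (Cmod2_alt (u N, v N)). simpl in H0. pose proof (Cmod_ge_0 (u N, v N)). nra. }
  pose proof (Cmod_ge_0 (zsumC f)). nra.
Qed.

(** * Convolution on Z *)

Definition zconv (f g : Z -> R) (n : Z) : R := zsumR (fun k => f k * g (n - k)%Z).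

Lemma zconv_ex_bounded (f g : Z -> R) (B : R) (n : Z) :
  (forall k, 0 <= f k) -> (forall k, 0 <= g k <= B) -> zsumR_ex f ->
  zsumR_ex (fun k => f k * g (n - k)%Z) /\ 0 <= zconv f g n <= B * zsumR f.
Proof.
  intros Hf Hg Ef.
  assert (Hfg : forall k, 0 <= f k * g (n - k)%Z <= B * f k).
  { intro k. specialize (Hf k). specialize (Hg (n - k)%Z). split; nra. }
  destruct (zsumR_scal B _ Ef) as [E V].
  destruct (zsumR_le _ _ Hfg E) as [E' Hle].
  split; [exact E'|split].
  - apply zsumR_nonneg; [apply Hfg|exact E'].
  - unfold zconv. lra.
Qed.

Lemma zconv_comm (f g : Z -> R) (n : Z) : zsumR_ex (fun k => f k * g (n - k)%Z) ->
  zsumR_ex (fun k => g k * f (n - k)%Z) /\ zconv g f n = zconv f g n.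
Proof.
  intro E. destruct (zsumR_sub_index _ n E) as [E' V].
  assert (Hk : forall k, f (n - k)%Z * g (n - (n - k))%Z = g k * f (n - k)%Z)
    by (intro k; replace (n - (n - k))%Z with k by lia; ring).
  split; [exact (zsumR_ex_ext _ _ Hk E')|].
  unfold zconv. rewrite <- (zsumR_ext _ _ Hk). exact V.
Qed.

Lemma zconv_le_compat_r (f g h : Z -> R) (n : Z) :
  (forall k, 0 <= f k) -> (forall k, 0 <= g k <= h k) -> zsumR_ex (fun k => f k * h (n - k)%Z) ->
  zsumR_ex (fun k => f k * g (n - k)%Z) /\ zconv f g n <= zconv f h n.
Proof.
  intros Hf Hgh E. apply zsumR_le; [intro k|exact E].
  specialize (Hf k). specialize (Hgh (n - k)%Z). split; nra.
Qed.

Lemma zconv_scal_r (f g : Z -> R) (c : R) (n : Z) : zsumR_ex (fun k => f k * g (n - k)%Z) ->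
  zconv f (fun j => c * g j) n = c * zconv f g n.
Proof.
  intro E. unfold zconv. rewrite <- (proj2 (zsumR_scal c _ E)).
  apply zsumR_ext. intro. ring.
Qed.

Lemma zconv_l1 (f g : Z -> R) : (forall k, 0 <= f k) -> (forall k, 0 <= g k) ->
  zsumR_ex f -> zsumR_ex g -> zsumR_ex (zconv f g) /\ zsumR (zconv f g) <= zsumR f * zsumR g.
Proof.
  intros Hf Hg Ef Eg. set (G := zsumR g).
  assert (HgG : forall k, 0 <= g k <= G) by (intro k; split; [|apply zsumR_term_le]; auto).
  pose proof (fun n => zconv_ex_bounded f g G n Hf HgG Ef) as Hconv.
  apply zsumR_bounded; [intro n; apply Hconv|]. intro N.
  destruct (zsumR_zpartial_swap (fun n k => f k * g (n - k)%Z) N (fun n => proj1 (Hconv n)))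
    as [_ V].
  unfold zconv. rewrite <- V.
  destruct (zsumR_scal G _ Ef) as [E' V']. rewrite Rmult_comm, <- V'.
  apply zsumR_le; [intro k|exact E'].
  split; [apply zpartial_nonneg; intro; apply Rmult_le_pos; auto|].
  destruct (zsumR_shift g (- k) Eg) as [Es Vs].
  destruct (zsumR_scal (f k) _ Es) as [Es' Vs'].
  apply Rle_trans with (zsumR (fun n => f k * g (n + - k)%Z)).
  - apply Rle_trans with (zpartial (fun n => f k * g (n + - k)%Z) N).
    + apply zpartial_le. intro n. replace (n - k)%Z with (n + - k)%Z by lia. lra.
    + apply zpartial_le_zsumR; [intro; apply Rmult_le_pos; auto|exact Es'].
  - rewrite Vs', Vs. fold G. lra.
Qed.

Lemma zconv_young (f x : Z -> R) : (forall k, 0 <= f k) -> (forall k, 0 <= x k) ->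
  zsumR_ex f -> zsumR_ex (fun k => x k ^ 2) ->
  zsumR_ex (fun n => zconv f x n ^ 2) /\
  zsumR (fun n => zconv f x n ^ 2) <= zsumR f ^ 2 * zsumR (fun k => x k ^ 2).
Proof.
  intros Hf Hx Ef Ex. set (F := zsumR f). set (Q := zsumR (fun k => x k ^ 2)).
  assert (HQ : forall j, 0 <= x j ^ 2 <= Q)
    by (intro j; split; [apply pow2_ge_0|apply (zsumR_term_le (fun k => x k ^ 2)); auto];
        intro; apply pow2_ge_0).
  assert (F0 : 0 <= F) by (apply zsumR_nonneg; auto).
  (* Cauchy-Schwarz against the measure [f]: [(f * x)^2 <= |f|_1 (f * x^2)] *)
  assert (Hpt : forall n, zconv f x n ^ 2 <= F * zconv f (fun k => x k ^ 2) n).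
  { intro n. destruct (zconv_ex_bounded f (fun k => x k ^ 2) Q n Hf HQ Ef) as [Ey _].
    assert (Hsq : forall k, sqrt (f k) ^ 2 = f k) by (intro; apply pow2_sqrt; auto).
    destruct (zsumR_cauchy_schwarz (fun k => sqrt (f k)) (fun k => sqrt (f k) * x (n - k)%Z))
      as [_ C].
    - intro; apply sqrt_pos.
    - intro; apply Rmult_le_pos; [apply sqrt_pos|auto].
    - exact (zsumR_ex_ext f _ (fun k => eq_sym (Hsq k)) Ef).
    - apply (zsumR_ex_ext _ _) with (2 := Ey). intro k. rewrite Rpow_mult_distr, Hsq. reflexivity.
    - unfold zconv.
      rewrite (zsumR_ext (fun k => f k * x (n - k)%Z)
                 (fun k => sqrt (f k) * (sqrt (f k) * x (n - k)%Z)))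
        by (intro k; rewrite <- Rmult_assoc, sqrt_sqrt; auto).
      eapply Rle_trans; [exact C|]. apply Req_le. f_equal; apply zsumR_ext; intro k.
      + apply Hsq.
      + rewrite Rpow_mult_distr, Hsq. reflexivity. }
  destruct (zconv_l1 f (fun k => x k ^ 2) Hf (fun k => proj1 (HQ k)) Ef Ex) as [E1 V1].
  destruct (zsumR_scal F _ E1) as [E2 V2].
  destruct (zsumR_le (fun n => zconv f x n ^ 2) _ (fun n => conj (pow2_ge_0 _) (Hpt n)) E2)
    as [E3 V3].
  split; [exact E3|]. eapply Rle_trans; [exact V3|]. rewrite V2. fold F Q in V1.
  replace (F ^ 2 * Q) with (F * (F * Q)) by ring. apply Rmult_le_compat_l; auto.
Qed.

Lemma zconv_weight_le (w f g : Z -> R) (c Bf Bg : R) (m : Z) :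
  (forall k, 0 <= w k) -> (forall k n, w n <= c * (w k + w (n - k)%Z)) ->
  (forall k, 0 <= f k) -> (forall k, 0 <= g k) -> zsumR_ex f -> zsumR_ex g ->
  (forall k, w k * f k <= Bf) -> (forall k, w k * g k <= Bg) ->
  w m * zconv f g m
  <= c * (zconv (fun k => w k * f k) g m + zconv f (fun k => w k * g k) m).
Proof.
  intros Hw Hw_split Hf Hg Ef Eg HBf HBg.
  assert (Ewf : zsumR_ex (fun k => w k * f k * g (m - k)%Z)).
  { refine (proj1 (zconv_comm g _ m
      (proj1 (zconv_ex_bounded g (fun j => w j * f j) Bf m Hg _ Eg)))).
    intro k. split; [apply Rmult_le_pos|]; auto. }
  assert (Ewg : zsumR_ex (fun k => f k * (w (m - k)%Z * g (m - k)%Z))).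
  { refine (proj1 (zconv_ex_bounded f (fun j => w j * g j) Bg m Hf _ Ef)).
    intro k. split; [apply Rmult_le_pos|]; auto. }
  destruct (zsumR_plus _ _ Ewf Ewg) as [E V].
  destruct (zsumR_scal c _ E) as [Ec Vc].
  assert (Efg : zsumR_ex (fun k => f k * g (m - k)%Z)).
  { apply (zconv_ex_bounded f g (zsumR g) m Hf); auto.
    intro k. split; [|apply zsumR_term_le]; auto. }
  unfold zconv at 1. rewrite <- (proj2 (zsumR_scal (w m) _ Efg)).
  unfold zconv. rewrite <- V, <- Vc.
  apply zsumR_le; [intro k|exact Ec].
  pose proof (Hw_split k m). pose proof (Hf k). pose proof (Hg (m - k)%Z).
  assert (0 <= f k * g (m - k)%Z) by (apply Rmult_le_pos; auto).
  split; [apply Rmult_le_pos; auto|].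
  apply Rle_trans with (c * (w k + w (m - k)%Z) * (f k * g (m - k)%Z)); [nra|].
  right. ring.
Qed.

(** * Japanese bracket weights *)

Lemma exp_le_compat (x y : R) : x <= y -> exp x <= exp y.
Proof. intros [Hlt | ->]; [left; apply exp_increasing, Hlt|apply Rle_refl]. Qed.

Lemma Rpower_telescope (q m : R) : 1 < q -> 2 <= m ->
  Rpower m (- q) <= (Rpower (m - 1) (- (q - 1)) - Rpower m (- (q - 1))) / (q - 1).
Proof.
  intros Hq Hm. unfold Rpower. set (r := q - 1). assert (Hr : 0 < r) by (unfold r; lra).
  set (A := exp (- r * ln m)). assert (A0 : 0 < A) by apply exp_pos.
  assert (E1 : exp (- q * ln m) = A * / m).
  { rewrite <- (exp_ln m) at 2 by lra. rewrite <- exp_Ropp.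
    unfold A. rewrite <- exp_plus. f_equal. unfold r. ring. }
  assert (E2 : exp (- r * ln (m - 1)) = A * exp (r * (ln m - ln (m - 1)))).
  { unfold A. rewrite <- exp_plus. f_equal. ring. }
  assert (Hln : / m <= ln m - ln (m - 1)).
  { pose proof (exp_ineq1_le (ln ((m - 1) / m))) as H.
    rewrite exp_ln in H by (apply Rdiv_lt_0_compat; lra).
    rewrite ln_div in H by lra.
    replace ((m - 1) / m) with (1 - / m) in H by (field; lra). lra. }
  set (X := exp (r * (ln m - ln (m - 1)))).
  assert (HX : r * / m <= X - 1)
    by (pose proof (exp_ineq1_le (r * (ln m - ln (m - 1)))) as HeX; fold X in HeX; nra).
  rewrite E1, E2. fold X. apply (Rmult_le_reg_r r); [exact Hr|].
  replace ((A * X - A) / r * r) with (A * (X - 1)) by (field; lra).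
  rewrite Rmult_assoc, (Rmult_comm (/ m)). apply Rmult_le_compat_l; lra.
Qed.

Lemma sum_Rpower_neg_le (q : R) (N : nat) : 1 < q ->
  sum_f_R0 (fun j => Rpower (INR j + 1) (- q)) N <= 1 + 1 / (q - 1).
Proof.
  intro Hq.
  assert (Htel : forall M, sum_f_R0 (fun j => Rpower (INR j + 1) (- q)) M
                           <= 1 + (1 - Rpower (INR M + 1) (- (q - 1))) / (q - 1)).
  { intro M. induction M as [|M IH].
    - simpl. replace (0 + 1) with 1 by ring. unfold Rpower. rewrite ln_1, !Rmult_0_r, exp_0. lra.
    - rewrite tech5, S_INR.
      pose proof (Rpower_telescope q (INR M + 1 + 1) Hq) as H.
      replace (INR M + 1 + 1 - 1) with (INR M + 1) in H by ring.
      specialize (H ltac:(pose proof (pos_INR M); lra)).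
      unfold Rdiv in *. lra. }
  eapply Rle_trans; [apply Htel|].
  pose proof (exp_pos (- (q - 1) * ln (INR N + 1))).
  assert (0 < / (q - 1)) by (apply Rinv_0_lt_compat; lra).
  unfold Rpower, Rdiv. nra.
Qed.

Lemma Rpower_neg_le_of_sq_le (s x y : R) : 0 <= s -> 1 <= y -> y ^ 2 <= 2 * (1 + x ^ 2) ->
  Rpower (1 + x ^ 2) (- s) <= Rpower 2 s * Rpower y (- (2 * s)).
Proof.
  intros Hs Hy Hxy. unfold Rpower. rewrite <- exp_plus. apply exp_le_compat.
  assert (H : ln (y ^ 2 / 2) <= ln (1 + x ^ 2))
    by (apply ln_le; [apply Rdiv_lt_0_compat; nra|lra]).
  replace (y ^ 2) with (y * y) in H by ring. rewrite ln_div, ln_mult in H by nra. nra.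
Qed.

Lemma zsumR_ex_jbr2_neg (s : R) : 1 / 2 < s -> zsumR_ex (jbr2 (- s)).
Proof.
  intro Hs. set (B := Rpower 2 s * (1 + 1 / (2 * s - 1))).
  enough (HB : forall N, zpartial (jbr2 (- s)) N <= 2 * B)
    by exact (proj1 (zsumR_bounded _ _ (fun n => Rlt_le _ _ (exp_pos _)) HB)).
  intro N. unfold zpartial, jbr2.
  assert (Hsum : forall g : nat -> R,
             (forall j, g j <= Rpower 2 s * Rpower (INR j + 1) (- (2 * s))) -> sum_f_R0 g N <= B).
  { intros g Hg.
    eapply Rle_trans;
      [apply (sum_growing _ (fun j => Rpower (INR j + 1) (- (2 * s)) * Rpower 2 s) N);
       intro j; rewrite Rmult_comm; apply Hg|].
    rewrite <- scal_sum. apply Rmult_le_compat_l; [left; apply exp_pos|].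
    apply sum_Rpower_neg_le. lra. }
  assert (Hpos : forall j : nat, Rpower (1 + IZR (Z.of_nat j) ^ 2) (- s)
                                 <= Rpower 2 s * Rpower (INR j + 1) (- (2 * s))).
  { intro j. rewrite <- INR_IZR_INZ. pose proof (pos_INR j). pose proof (pow2_ge_0 (INR j - 1)).
    apply Rpower_neg_le_of_sq_le; nra. }
  assert (Hneg : forall j : nat, Rpower (1 + IZR (- Z.of_nat (S j)) ^ 2) (- s)
                                 <= Rpower 2 s * Rpower (INR j + 1) (- (2 * s))).
  { intro j. rewrite opp_IZR, <- INR_IZR_INZ, S_INR. pose proof (pos_INR j).
    apply Rpower_neg_le_of_sq_le; nra. }
  pose proof (Hsum _ Hpos). pose proof (Hsum _ Hneg). lra.
Qed.

Definition bracket (s : R) (n : Z) : R := Rpower (1 + IZR n ^ 2) (s / 2).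

Lemma bracket_pos (s : R) (n : Z) : 0 < bracket s n.
Proof. apply exp_pos. Qed.

Lemma bracket_sq (s : R) (n : Z) : bracket s n ^ 2 = jbr2 s n.
Proof.
  unfold bracket, jbr2. set (x := 1 + IZR n ^ 2).
  replace (Rpower x (s / 2) ^ 2) with (Rpower x (s / 2) * Rpower x (s / 2)) by ring.
  rewrite <- Rpower_plus. f_equal. field.
Qed.

Lemma jbr2_ge_1 (s : R) (n : Z) : 0 <= s -> 1 <= jbr2 s n.
Proof.
  intro Hs. pose proof (pow2_ge_0 (IZR n)). unfold jbr2.
  apply Rle_trans with (Rpower (1 + IZR n ^ 2) 0); [rewrite Rpower_O; lra|apply Rle_Rpower; lra].
Qed.

Lemma jbr2_opp (s : R) (n : Z) : jbr2 (- s) n = / jbr2 s n.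
Proof. apply Rpower_Ropp. Qed.

Lemma IZR_sq_le_jbr2_sq (s : R) (n : Z) : 1 / 2 <= s -> IZR n ^ 2 <= jbr2 s n ^ 2.
Proof.
  intro Hs. pose proof (pow2_ge_0 (IZR n)). unfold jbr2. set (x := 1 + IZR n ^ 2).
  replace (Rpower x s ^ 2) with (Rpower x s * Rpower x s) by ring. rewrite <- Rpower_plus.
  apply Rle_trans with x; [unfold x; lra|].
  rewrite <- (Rpower_1 x) at 1 by (unfold x; lra). apply Rle_Rpower; unfold x; lra.
Qed.

(* Peetre's inequality, from [1 + (a + b)^2 <= 4 max (1 + a^2, 1 + b^2)] *)
Lemma bracket_le_split (s : R) (k m : Z) : 0 <= s ->
  bracket s m <= Rpower 4 (s / 2) * (bracket s k + bracket s (m - k)).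
Proof.
  intro Hs. unfold bracket.
  replace (IZR m) with (IZR k + IZR (m - k)) by (rewrite <- plus_IZR; f_equal; lia).
  set (a := IZR k). set (b := IZR (m - k)).
  assert (PA : 0 < Rpower (1 + a ^ 2) (s / 2)) by apply exp_pos.
  assert (PB : 0 < Rpower (1 + b ^ 2) (s / 2)) by apply exp_pos.
  assert (P4 : 0 < Rpower 4 (s / 2)) by apply exp_pos.
  pose proof (pow2_ge_0 a). pose proof (pow2_ge_0 b). pose proof (pow2_ge_0 (a - b)).
  destruct (Rle_dec (1 + a ^ 2) (1 + b ^ 2)).
  - eapply Rle_trans; [apply (Rle_Rpower_l _ (4 * (1 + b ^ 2))); [lra|split; nra]|].
    rewrite <- Rpower_mult_distr by nra. nra.
  - eapply Rle_trans; [apply (Rle_Rpower_l _ (4 * (1 + a ^ 2))); [lra|split; nra]|].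
    rewrite <- Rpower_mult_distr by nra. nra.
Qed.

(** * The trilinear estimates *)

Lemma jbr2_Cmod_sq_le_Hs_sq (s : R) (a : Z -> C) (n : Z) :
  in_Hs s a -> jbr2 s n * Cmod (a n) ^ 2 <= Hs_sq s a.
Proof.
  intro Ea. apply (zsumR_term_le (fun k => jbr2 s k * Cmod (a k) ^ 2)); [|exact Ea].
  intro k. apply Rmult_le_pos; [left; apply exp_pos|apply pow2_ge_0].
Qed.

Lemma Hs_sq_nonneg (s : R) (a : Z -> C) : in_Hs s a -> 0 <= Hs_sq s a.
Proof.
  intro Ea. apply zsumR_nonneg; [|exact Ea].
  intro n. apply Rmult_le_pos; [left; apply exp_pos|apply pow2_ge_0].
Qed.

Lemma Hs_sq_le_of_Hs_norm_le (s M : R) (a : Z -> C) :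
  in_Hs s a -> Hs_norm s a <= M -> Hs_sq s a <= M ^ 2.
Proof.
  intros Ea HM. pose proof (Hs_sq_nonneg s a Ea) as H0.
  unfold Hs_norm in HM. rewrite <- (pow2_sqrt (Hs_sq s a) H0).
  apply pow_incr. split; [apply sqrt_pos|exact HM].
Qed.

Lemma res_term_Hs_sq_le (s M : R) (a b : Z -> C) : 1 / 2 <= s ->
  in_Hs s a -> in_Hs s b -> Hs_sq s a <= M ^ 2 -> Hs_sq s b <= M ^ 2 ->
  in_Hs (- s) (res_term a b) /\ Hs_sq (- s) (res_term a b) <= M ^ 6.
Proof.
  intros Hs Ea Eb Ma Mb.
  assert (Hpt : forall n, 0 <= jbr2 (- s) n * Cmod (res_term a b n) ^ 2
                          <= M ^ 4 * (jbr2 s n * Cmod (a n) ^ 2)).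
  { intro n. rewrite jbr2_opp. unfold res_term. rewrite Cmod_mult, Cmod_R, Rabs_mult.
    pose proof (Rle_trans _ _ _ (jbr2_Cmod_sq_le_Hs_sq s a n Ea) Ma) as Ha.
    pose proof (Rle_trans _ _ _ (jbr2_Cmod_sq_le_Hs_sq s b n Eb) Mb) as Hb.
    pose proof (IZR_sq_le_jbr2_sq s n Hs) as Hn.
    pose proof (jbr2_ge_1 s n ltac:(lra)) as Hw.
    replace ((Rabs (IZR n) * Rabs (Cmod (a n) ^ 2 - Cmod (b n) ^ 2) * Cmod (a n)) ^ 2)
      with (IZR n ^ 2 * (Cmod (a n) ^ 2 - Cmod (b n) ^ 2) ^ 2 * Cmod (a n) ^ 2)
      by (rewrite !Rpow_mult_distr, !pow2_abs; ring).
    set (w := jbr2 s n) in *. set (u := Cmod (a n) ^ 2) in *. set (v := Cmod (b n) ^ 2) in *.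
    assert (u0 : 0 <= u) by apply pow2_ge_0. assert (v0 : 0 <= v) by apply pow2_ge_0.
    assert (Hi : 0 < / w <= 1)
      by (split; [apply Rinv_0_lt_compat; lra|rewrite <- Rinv_1; apply Rinv_le_contravar; lra]).
    (* [w |u - v| <= M^2] and [n^2 <= w^2] give [n^2 (u - v)^2 <= M^4] *)
    assert (Hd : IZR n ^ 2 * (u - v) ^ 2 <= M ^ 4).
    { assert (Hwd : (w * (u - v)) ^ 2 <= (M ^ 2) ^ 2).
      { assert (0 <= w * u) by nra. assert (0 <= w * v) by nra.
        replace (w * (u - v)) with (w * u - w * v) by ring. nra. }
      apply Rle_trans with ((w * (u - v)) ^ 2); [rewrite Rpow_mult_distr|nra].
      apply Rmult_le_compat_r; [apply pow2_ge_0|exact Hn]. }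
    assert (Hd0 : 0 <= IZR n ^ 2 * (u - v) ^ 2) by (apply Rmult_le_pos; apply pow2_ge_0).
    split; [apply Rmult_le_pos; [lra|apply Rmult_le_pos; lra]|].
    apply Rle_trans with (/ w * (M ^ 4 * u)); [apply Rmult_le_compat_l; nra|].
    assert (0 <= M ^ 4 * u)
      by (apply Rmult_le_pos; [replace (M ^ 4) with ((M ^ 2) ^ 2) by ring; apply pow2_ge_0|lra]).
    nra. }
  destruct (zsumR_scal (M ^ 4) _ Ea) as [E V].
  destruct (zsumR_le _ _ Hpt E) as [E' Hle].
  split; [exact E'|]. unfold Hs_sq. rewrite V in Hle. eapply Rle_trans; [exact Hle|].
  replace (M ^ 6) with (M ^ 4 * M ^ 2) by ring.
  apply Rmult_le_compat_l; [replace (M ^ 4) with ((M ^ 2) ^ 2) by ring; apply pow2_ge_0|exact Ma].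
Qed.

Lemma nonres_sum_Cmod_le (a : Z -> C) (n : Z) : zsumR_ex (fun k => Cmod (a k)) ->
  Cmod (nonres_sum a n)
  <= zconv (fun k => Cmod (a k)) (zconv (fun k => Cmod (a k)) (fun k => Cmod (a k))) n.
Proof.
  intro E. set (al := fun k => Cmod (a k)). fold al in E. set (L := zsumR al).
  assert (Hal : forall k, 0 <= al k <= L)
    by (intro k; split; [apply Cmod_ge_0|apply zsumR_term_le; [intro; apply Cmod_ge_0|exact E]]).
  pose proof (fun m => zconv_ex_bounded al al L m (fun k => proj1 (Hal k)) Hal E) as Hg.
  unfold nonres_sum. apply Cmod_zsumC_le.
  2:{ apply (zconv_ex_bounded al (zconv al al) (L * L) n (fun k => proj1 (Hal k))); [|exact E].
      intro m. apply Hg. }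
  intro n1. destruct (zsumR_scal (al n1) _ (proj1 (Hg (n - n1)%Z))) as [Es Vs].
  unfold zconv at 1. rewrite <- Vs. apply Cmod_zsumC_le; [|exact Es].
  intro n2. destruct Z.eq_dec.
  - rewrite Cmod_0. apply Rmult_le_pos; [|apply Rmult_le_pos]; apply Cmod_ge_0.
  - rewrite !Cmod_mult. unfold al. right. ring.
Qed.

Section NonresonantEstimate.

Variables (s : R) (a : Z -> C).
Hypothesis Hs : 1 / 2 < s.
Hypothesis Ea : in_Hs s a.

Let al (k : Z) : R := Cmod (a k).
Let A (k : Z) : R := bracket s k * Cmod (a k).
Let c : R := Rpower 4 (s / 2).

Let al_nonneg (k : Z) : 0 <= al k := Cmod_ge_0 (a k).

Let A_nonneg (k : Z) : 0 <= A k.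
Proof. apply Rmult_le_pos; [left; apply bracket_pos|apply Cmod_ge_0]. Qed.

Lemma weighted_sq_summable : zsumR_ex (fun k => A k ^ 2) /\ zsumR (fun k => A k ^ 2) = Hs_sq s a.
Proof.
  assert (HA : forall k, jbr2 s k * Cmod (a k) ^ 2 = A k ^ 2)
    by (intro k; unfold A; rewrite Rpow_mult_distr, bracket_sq; reflexivity).
  split; [exact (zsumR_ex_ext _ _ HA Ea)|]. symmetry. exact (zsumR_ext _ _ HA).
Qed.

Lemma Cmod_l1_sq_le : zsumR_ex al /\ zsumR al ^ 2 <= zsumR (jbr2 (- s)) * Hs_sq s a.
Proof.
  destruct weighted_sq_summable as [EA VA].
  assert (Hx : forall k, (/ bracket s k) ^ 2 = jbr2 (- s) k)
    by (intro k; rewrite jbr2_opp, <- bracket_sq, pow_inv; reflexivity).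
  assert (Hxy : forall k, / bracket s k * A k = al k)
    by (intro k; unfold A, al; field; apply Rgt_not_eq, bracket_pos).
  destruct (zsumR_cauchy_schwarz (fun k => / bracket s k) A) as [E C].
  - intro k. left. apply Rinv_0_lt_compat, bracket_pos.
  - exact A_nonneg.
  - exact (zsumR_ex_ext _ _ (fun k => eq_sym (Hx k)) (zsumR_ex_jbr2_neg s Hs)).
  - exact EA.
  - split; [exact (zsumR_ex_ext _ _ Hxy E)|].
    rewrite <- (zsumR_ext _ _ Hxy), <- VA, <- (zsumR_ext _ _ Hx). exact C.
Qed.

Let BA : R := (1 + Hs_sq s a) / 2.

Let A_bounded (k : Z) : 0 <= A k <= BA.
Proof.
  split; [apply A_nonneg|]. destruct weighted_sq_summable as [EA VA].
  unfold BA. rewrite <- VA. exact (zsumR_sq_bound A k EA).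
Qed.

Let al_l1 : zsumR_ex al := proj1 Cmod_l1_sq_le.

Let bracket_split (k n : Z) : bracket s n <= c * (bracket s k + bracket s (n - k)%Z).
Proof. apply bracket_le_split. lra. Qed.

Lemma bracket_conv_le (m : Z) : bracket s m * zconv al al m <= 2 * c * zconv al A m.
Proof.
  pose proof (zconv_weight_le (bracket s) al al c BA BA m (fun k => Rlt_le _ _ (bracket_pos s k))
    bracket_split al_nonneg al_nonneg al_l1 al_l1 (fun k => proj2 (A_bounded k))
    (fun k => proj2 (A_bounded k))) as H.
  destruct (zconv_ex_bounded al A BA m al_nonneg A_bounded al_l1) as [E _].
  change (fun k => bracket s k * al k) with A in H. rewrite (proj2 (zconv_comm _ _ _ E)) in H. lra.
Qed.

Let c_pos : 0 < c.
Proof. apply exp_pos. Qed.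

Let L : R := zsumR al.
Let g : Z -> R := zconv al al.
Let Y : Z -> R := zconv al A.

Let al_bounded (k : Z) : 0 <= al k <= L.
Proof. split; [apply al_nonneg|apply zsumR_term_le; [exact al_nonneg|exact al_l1]]. Qed.

Let g_spec (m : Z) : zsumR_ex (fun k => al k * al (m - k)%Z) /\ 0 <= g m <= L * L :=
  zconv_ex_bounded al al L m al_nonneg al_bounded al_l1.

Let Y_spec (m : Z) : zsumR_ex (fun k => al k * A (m - k)%Z) /\ 0 <= Y m <= BA * L :=
  zconv_ex_bounded al A BA m al_nonneg A_bounded al_l1.

Let g_l1 : zsumR_ex g /\ zsumR g <= L * L := zconv_l1 al al al_nonneg al_nonneg al_l1 al_l1.

Lemma bracket_conv3_le (n : Z) :
  bracket s n * zconv al g n <= c * zconv g A n + 2 * c ^ 2 * zconv al Y n.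
Proof.
  assert (Hg : forall k, 0 <= g k) by (intro k; apply g_spec).
  assert (HY : forall k, 0 <= Y k <= BA * L) by (intro k; apply Y_spec).
  assert (HwY : forall k, 0 <= bracket s k * g k <= 2 * c * Y k).
  { intro k. split; [|apply bracket_conv_le].
    apply Rmult_le_pos; [left; apply bracket_pos|apply Hg]. }
  assert (H2cY : forall k, 0 <= 2 * c * Y k <= 2 * c * (BA * L)).
  { intro k. specialize (HY k). split; [|apply Rmult_le_compat_l]; nra. }
  pose proof (zconv_weight_le (bracket s) al g c BA (2 * c * (BA * L)) n
    (fun k => Rlt_le _ _ (bracket_pos s k)) bracket_split al_nonneg Hg al_l1 (proj1 g_l1)
    (fun k => proj2 (A_bounded k)) (fun k => Rle_trans _ _ _ (proj2 (HwY k)) (proj2 (H2cY k))))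
    as H.
  change (fun k => bracket s k * al k) with A in H.
  rewrite (proj2 (zconv_comm _ _ _ (proj1 (zconv_ex_bounded g A BA n Hg A_bounded (proj1 g_l1)))))
    in H.
  destruct (zconv_le_compat_r al _ _ n al_nonneg HwY
              (proj1 (zconv_ex_bounded al _ _ n al_nonneg H2cY al_l1))) as [_ Hle].
  rewrite (zconv_scal_r _ _ _ _ (proj1 (zconv_ex_bounded al Y _ n al_nonneg HY al_l1))) in Hle.
  nra.
Qed.

Lemma nonres_term_pointwise_le (n : Z) :
  0 <= jbr2 (- s) n * Cmod (nonres_term a n) ^ 2
  <= 2 * c ^ 2 * zconv g A n ^ 2 + 8 * c ^ 4 * zconv al Y n ^ 2.
Proof.
  rewrite jbr2_opp. unfold nonres_term. rewrite Cmod_mult, Cmod_R.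
  pose proof (nonres_sum_Cmod_le a n al_l1) as HN.
  pose proof (bracket_conv3_le n) as HP.
  pose proof (IZR_sq_le_jbr2_sq s n ltac:(lra)) as Hn.
  pose proof (jbr2_ge_1 s n ltac:(lra)) as Hw.
  pose proof (bracket_sq s n) as Hb. pose proof (bracket_pos s n) as Hb0.
  assert (Hd : 0 <= zconv al g n).
  { apply (zconv_ex_bounded al g (L * L) n al_nonneg); [intro; apply g_spec|exact al_l1]. }
  change (zconv (fun k => Cmod (a k)) (zconv (fun k => Cmod (a k)) (fun k => Cmod (a k))) n)
    with (zconv al g n) in HN.
  set (w := jbr2 s n) in *. set (d := zconv al g n) in *.
  set (X1 := zconv g A n) in *. set (X2 := zconv al Y n) in *.
  pose proof (Cmod_ge_0 (nonres_sum a n)).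
  assert (Hi : 0 < / w) by (apply Rinv_0_lt_compat; lra).
  split; [apply Rmult_le_pos; [lra|apply pow2_ge_0]|].
  (* [<n>^{-2s} n^2 d^2 <= <n>^{2s} d^2 = (<n>^s d)^2], and [(p + q)^2 <= 2 p^2 + 2 q^2] *)
  apply Rle_trans with (/ w * (IZR n ^ 2 * d ^ 2)).
  { apply Rmult_le_compat_l; [lra|]. rewrite Rpow_mult_distr, pow2_abs.
    apply Rmult_le_compat_l; [apply pow2_ge_0|apply pow_incr; lra]. }
  apply Rle_trans with ((bracket s n * d) ^ 2).
  { rewrite Rpow_mult_distr, Hb, <- Rmult_assoc.
    apply Rmult_le_compat_r; [apply pow2_ge_0|].
    apply Rmult_le_reg_l with w; [lra|]. rewrite <- Rmult_assoc, Rinv_r by lra. nra. }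
  apply Rle_trans with ((c * X1 + 2 * c ^ 2 * X2) ^ 2).
  { apply pow_incr. split; [apply Rmult_le_pos; lra|exact HP]. }
  pose proof (pow2_ge_0 (c * X1 - 2 * c ^ 2 * X2)). nra.
Qed.

Lemma nonres_term_Hs_sq_le :
  in_Hs (- s) (nonres_term a) /\
  Hs_sq (- s) (nonres_term a)
  <= (2 * c ^ 2 + 8 * c ^ 4) * zsumR (jbr2 (- s)) ^ 2 * Hs_sq s a ^ 3.
Proof.
  destruct weighted_sq_summable as [EA VA].
  pose proof (proj2 Cmod_l1_sq_le) as HL. fold L in HL.
  set (Q := Hs_sq s a) in *. set (Zs := zsumR (jbr2 (- s))) in *.
  assert (Hg : forall k, 0 <= g k) by (intro k; apply g_spec).
  assert (HY : forall k, 0 <= Y k) by (intro k; apply Y_spec).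
  assert (L0 : 0 <= L) by (apply zsumR_nonneg; [exact al_nonneg|exact al_l1]).
  pose proof (Hs_sq_nonneg s a Ea) as Q0. fold Q in Q0.
  pose proof (proj1 g_l1) as Eg. pose proof (proj2 g_l1) as Vg.
  assert (G0 : 0 <= zsumR g) by (apply zsumR_nonneg; auto).
  destruct (zconv_young g A Hg A_nonneg Eg EA) as [EX1 VX1].
  destruct (zconv_young al A al_nonneg A_nonneg al_l1 EA) as [EY VY].
  destruct (zconv_young al Y al_nonneg HY al_l1 EY) as [EX2 VX2].
  rewrite VA in VX1, VY. fold L in VY, VX2.
  assert (HX1 : zsumR (fun n => zconv g A n ^ 2) <= L ^ 4 * Q).
  { eapply Rle_trans; [exact VX1|]. apply Rmult_le_compat_r; [exact Q0|].
    replace (L ^ 4) with ((L * L) ^ 2) by ring. apply pow_incr. lra. }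
  assert (HX2 : zsumR (fun n => zconv al Y n ^ 2) <= L ^ 4 * Q).
  { eapply Rle_trans; [exact VX2|]. replace (L ^ 4 * Q) with (L ^ 2 * (L ^ 2 * Q)) by ring.
    apply Rmult_le_compat_l; [apply pow2_ge_0|exact VY]. }
  assert (HL4 : L ^ 4 * Q <= Zs ^ 2 * Q ^ 3).
  { replace (L ^ 4) with ((L ^ 2) ^ 2) by ring.
    replace (Zs ^ 2 * Q ^ 3) with ((Zs * Q) ^ 2 * Q) by ring.
    apply Rmult_le_compat_r; [exact Q0|]. apply pow_incr. split; [apply pow2_ge_0|exact HL]. }
  destruct (zsumR_scal (2 * c ^ 2) _ EX1) as [F1 V1].
  destruct (zsumR_scal (8 * c ^ 4) _ EX2) as [F2 V2].
  destruct (zsumR_plus _ _ F1 F2) as [F V].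
  destruct (zsumR_le _ _ nonres_term_pointwise_le F) as [E Hle].
  split; [exact E|]. unfold Hs_sq. eapply Rle_trans; [exact Hle|]. rewrite V, V1, V2.
  assert (0 <= 2 * c ^ 2) by (pose proof (pow2_ge_0 c); lra).
  assert (0 <= 8 * c ^ 4)
    by (pose proof (pow2_ge_0 (c ^ 2)); replace (c ^ 4) with ((c ^ 2) ^ 2) by ring; lra).
  nra.
Qed.

End NonresonantEstimate.

Lemma Hs_norm_le_of_Hs_sq_le (s B : R) (a : Z -> C) :
  0 <= B -> Hs_sq s a <= B ^ 2 -> Hs_norm s a <= B.
Proof. intros HB H. unfold Hs_norm. rewrite <- (sqrt_pow2 B HB). apply sqrt_le_1_alt, H. Qed.

Theorem lemma6p1 :
  forall s : R, 1 / 2 < s ->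
  exists K : R, 0 < K /\
  forall (beta gamma mu T : R) (v : R -> Z -> C),
    0 <= beta -> (mu = 1 \/ mu = -1) -> 0 < T ->
    cont_Hs s T v ->
    solves beta gamma mu T v ->
    forall M : R, (forall t, 0 <= t <= T -> Hs_norm s (v t) <= M) ->
    forall t, 0 <= t <= T ->
      (in_Hs (- s) (res_term (v t) (v 0)) /\
       Hs_norm (- s) (res_term (v t) (v 0)) <= K * M ^ 3) /\
      (in_Hs (- s) (nonres_term (v t)) /\
       Hs_norm (- s) (nonres_term (v t)) <= K * M ^ 3).
Proof.
  intros s Hs. set (c := Rpower 4 (s / 2)).
  set (K2 := (2 * c ^ 2 + 8 * c ^ 4) * zsumR (jbr2 (- s)) ^ 2).
  assert (HK2 : 0 <= K2).
  { apply Rmult_le_pos; [|apply pow2_ge_0].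
    pose proof (pow2_ge_0 c). pose proof (pow2_ge_0 (c ^ 2)). nra. }
  set (r := sqrt K2). assert (r0 : 0 <= r) by apply sqrt_pos.
  exists (1 + r). split; [lra|].
  intros beta gamma mu T v _ _ _ [Hv _] _ M HM t Ht.
  assert (H0 : 0 <= 0 <= T) by lra.
  destruct (Hv t Ht) as [Et _]. destruct (Hv 0 H0) as [E0 _].
  pose proof (Hs_sq_le_of_Hs_norm_le _ _ _ Et (HM t Ht)) as Mt.
  pose proof (Hs_sq_le_of_Hs_norm_le _ _ _ E0 (HM 0 H0)) as M0.
  assert (HM0 : 0 <= M) by (eapply Rle_trans; [apply sqrt_pos|apply (HM 0 H0)]).
  assert (HM3 : 0 <= M ^ 3) by (apply pow_le, HM0).
  split.
  - destruct (res_term_Hs_sq_le s M (v t) (v 0) ltac:(lra) Et E0 Mt M0) as [E Hle].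
    split; [exact E|]. apply Hs_norm_le_of_Hs_sq_le; [nra|].
    eapply Rle_trans; [exact Hle|]. replace (M ^ 6) with ((M ^ 3) ^ 2) by ring. nra.
  - destruct (nonres_term_Hs_sq_le s (v t) Hs Et) as [E Hle]. fold c in Hle.
    split; [exact E|]. apply Hs_norm_le_of_Hs_sq_le; [nra|].
    eapply Rle_trans; [exact Hle|].
    pose proof (Hs_sq_nonneg s (v t) Et) as Q0.
    assert (HQ : Hs_sq s (v t) ^ 3 <= (M ^ 3) ^ 2)
      by (replace ((M ^ 3) ^ 2) with ((M ^ 2) ^ 3) by ring; apply pow_incr; lra).
    apply Rle_trans with (K2 * (M ^ 3) ^ 2); [apply Rmult_le_compat_l; assumption|].
    rewrite <- (pow2_sqrt K2 HK2). fold r. nra.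
Qed.
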